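(* Let $k$ be a field with $\mathrm{char}(k)\neq2$, let $m\in\{3,4\}$, and let $Q_1,Q_2$ be quadratic forms in $m$ variables over $k$ with matrices of second partial derivatives $A$ and $B$. Assume that $\ker(A)\cap\ker(B)=0$ (i.e. $\{Q_1=Q_2=0\}\subset\mathbb{P}^{m-1}$ is not a cone) and that the binary form $\det(Ax+Bz)$ is identically zero. Then: (i) if $m=3$, $(Q_1,Q_2)$ is $k$-equivalent to $(x_1x_2,\ x_2x_3)$; (ii) if $m=4$, $(Q_1,Q_2)$ is $k$-equivalent to $(x_1x_2,\ x_2x_3-x_4^2)$.
   Context: Two pairs of quadratic forms in $m$ variables over $k$ are $k$-equivalent if they lie in the same orbit of $GL_2(k)\times GL_m(k)$, where $(M,N)$ acts by replacing $(Q_1,Q_2)$ by $(m_{11}Q_1+m_{12}Q_2,\ m_{21}Q_1+m_{22}Q_2)$ and then substituting $x_j\leftarrow\sum_i n_{ij}x_i$. *)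

From HB Require Import structures.
From mathcomp Require Import all_boot all_order all_algebra.
From mathcomp Require Import mpoly.
Set Implicit Arguments.
Unset Strict Implicit.
Unset Printing Implicit Defensive.
Import GRing.Theory.
Local Open Scope ring_scope.

Definition quadratic_form (k : fieldType) (m : nat) (Q : {mpoly k[m]}) : Prop :=
  Q \is 2.-homog.

(* Matrix of second partial derivatives (its entries are constants). *)
Definition hessian (k : fieldType) (m : nat) (Q : {mpoly k[m]}) : 'M[k]_m :=
  \matrix_(i, j) (mderiv i (mderiv j Q))@_0%MM.

Definition kernels_meet_trivially (k : fieldType) (m : nat) (A B : 'M[k]_m) : Prop :=
  forall v : 'cV[k]_m, A *m v = 0 -> B *m v = 0 -> v = 0.

Definition pencil_det (k : fieldType) (m : nat) (A B : 'M[k]_m) : {mpoly k[2]} :=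
  \det (('X_0 : {mpoly k[2]}) *: map_mx (fun a => a%:MP) A
        + ('X_1 : {mpoly k[2]}) *: map_mx (fun a => a%:MP) B).

Definition lin_subst (k : fieldType) (m : nat) (N : 'M[k]_m) : m.-tuple {mpoly k[m]} :=
  [tuple \sum_(i < m) N i j *: 'X_i | j < m].

Definition k_equivalent (k : fieldType) (m : nat) (Q1 Q2 P1 P2 : {mpoly k[m]}) : Prop :=
  exists (M : 'M[k]_2) (N : 'M[k]_m),
    [/\ M \in unitmx, N \in unitmx,
        (M 0 0 *: Q1 + M 0 1 *: Q2) \mPo lin_subst N = P1
      & (M 1 0 *: Q1 + M 1 1 *: Q2) \mPo lin_subst N = P2].

(* Since [2] is invertible, a quadratic form is half the form of its Hessian, and
   k-equivalence of pairs of forms is congruence of the pencils of their Hessians [A], [B].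
   As [det (A + X B) = 0], some nonzero polynomial row vector [v0 + v1 X + ...] with
   [v0 != 0] lies in the left kernel of [A + X B]; its coefficients [v0, v1, v2] span a
   subspace that is totally isotropic for both forms, and since the common kernel is
   trivial such a subspace has dimension at most [2m/3 < 3].  The resulting linear
   dependence yields a degree-one kernel vector [v0 + v1 X].  From it one builds
   [w0, w1, w2] in which the pencil reads (x1x2, x2x3).  For [m = 3] this is the normal
   form; for [m = 4] the common orthogonal [y] of this triple adds multiples of [x4^2] to
   both forms, and a change of pencil basis removes the first one and normalizes the
   second. *)

From HB Require Import structures.
From mathcomp Require Import all_boot all_order all_algebra.
From mathcomp Require Import mpoly.
From mathcomp Require Import zify ring.
Set Implicit Arguments.
Unset Strict Implicit.
Unset Printing Implicit Defensive.
Import GRing.Theory.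
Local Open Scope ring_scope.

Section QuadraticForm.
Variables (k : fieldType) (n : nat).
Implicit Types (p : {mpoly k[n]}) (S : 'M[k]_n).

Definition qform S : {mpoly k[n]} := \sum_i \sum_j S i j *: ('X_i * 'X_j).

Lemma qform_is_linear : linear qform.
Proof.
move=> c S T; rewrite /qform scaler_sumr -big_split; apply: eq_bigr => i _ /=.
rewrite scaler_sumr -big_split; apply: eq_bigr => j _ /=.
by rewrite !mxE scalerDl scalerA.
Qed.
HB.instance Definition _ :=
  GRing.isLinear.Build k 'M[k]_n {mpoly k[n]} _ qform qform_is_linear.

Lemma hessian_is_linear : linear (@hessian k n).
Proof.
by move=> c p q; apply/matrixP => i j; rewrite !mxE !mderivD !mderivZ mcoeffD mcoeffZ.
Qed.
HB.instance Definition _ :=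
  GRing.isLinear.Build k {mpoly k[n]} 'M[k]_n _ (@hessian k n) hessian_is_linear.

Lemma trmx_hessian p : (hessian p)^T = hessian p.
Proof. by apply/matrixP => i j; rewrite !mxE mderiv_comm. Qed.

Lemma mderivXU (a j : 'I_n) : mderiv j ('X_a : {mpoly k[n]}) = (a == j)%:R%:MP.
Proof.
rewrite mderivX mnm1E; case: eqP => [->|_]; last by rewrite scale0r.
have -> : (U_(j) - U_(j))%MM = 0%MM by apply/mnmP => i; rewrite mnmBE mnm0E subnn.
by rewrite mpolyX0 scale1r.
Qed.

Lemma hessian_mulXX (a b : 'I_n) :
  hessian ('X_a * 'X_b : {mpoly k[n]}) = delta_mx a b + delta_mx b a.
Proof.
apply/matrixP => i j; rewrite !mxE mderivM mderivD !mderivM !mderivXU !mderivC.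
rewrite !mulr0 !mul0r !addr0 !add0r -!mpolyCM mcoeffD !mcoeffC eqxx !mulr1 -!natrM.
by rewrite !mulnb addrC [a == i]eq_sym [b == j]eq_sym [a == j]eq_sym [b == i]eq_sym andbC.
Qed.

Lemma qform_delta (a b : 'I_n) : qform (delta_mx a b) = 'X_a * 'X_b.
Proof.
rewrite /qform (bigD1 a) //= [X in _ + X]big1 => [|i nia]; last first.
  by rewrite big1 // => j _; rewrite mxE (negbTE nia) scale0r.
rewrite addr0 (bigD1 b) //= big1 => [|j njb]; last by rewrite mxE (negbTE njb) andbF scale0r.
by rewrite mxE !eqxx scale1r addr0.
Qed.

Lemma mdeg_eq2 (m : 'X_{1..n}) : mdeg m = 2%N -> exists a b, m = (U_(a) + U_(b))%MM.
Proof.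
move=> m2; have /existsP [a ma] : [exists a, m a != 0%N].
  rewrite -negb_forall; apply/negP => /forallP m0; move: m2.
  by rewrite (_ : m = 0%MM) ?mdeg0 //; apply/mnmP => i; rewrite mnm0E; apply/eqP.
have Ua_le : (U_(a) <= m)%MM.
  by apply/mnm_lepP => i; rewrite mnm1E; case: eqP => // <-; rewrite lt0n.
have /mdeg1P [b /eqP mb] : mdeg (m - U_(a)) == 1%N.
  by move: m2; rewrite -{1}(submK Ua_le) mdegD mdeg1 addn1 => -[->].
by exists a, b; rewrite -mb addmC submK.
Qed.

Lemma qform_hessian p : p \is 2.-homog -> qform (hessian p) = 2%:R *: p.
Proof.
move/dhomogP => p2; rewrite {1 2}[p]mpolyE !linear_sum /= big_seq [RHS]big_seq.
apply: eq_bigr => m /p2 /mdeg_eq2 [a [b ->]]; rewrite !linearZ /= mpolyXD hessian_mulXX.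
by rewrite linearD /= !qform_delta [_ * 'X_a]mulrC scaler_nat mulr2n.
Qed.

Lemma lin_substE (N : 'M[k]_n) (j : 'I_n) : (lin_subst N)`_j = \sum_i N i j *: 'X_i.
Proof. by rewrite -tnth_nth tnth_mktuple. Qed.

Lemma qform_lin_subst S (N : 'M[k]_n) :
  qform S \mPo lin_subst N = qform (N *m S *m N^T).
Proof.
rewrite /qform raddf_sum /=.
transitivity (\sum_i \sum_p \sum_j \sum_l
                (N i j * S j l * N p l) *: ('X_i * 'X_p) : {mpoly k[n]}).
  under eq_bigr => j _ do rewrite raddf_sum /=.
  under eq_bigr => j _ do under eq_bigr => l _ do
    rewrite comp_mpolyZ rmorphM /= !comp_mpolyXU !lin_substE big_distrlr /= scaler_sumr.
  under eq_bigr => j _ do rewrite exchange_big /=.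
  rewrite exchange_big /=; apply: eq_bigr => i _.
  under eq_bigr => j _ do under eq_bigr => l _ do rewrite scaler_sumr.
  under eq_bigr => j _ do rewrite exchange_big /=.
  rewrite exchange_big /=; apply: eq_bigr => p _.
  apply: eq_bigr => j _; apply: eq_bigr => l _.
  by rewrite -scalerAl -scalerAr !scalerA [S j l * _]mulrC.
apply: eq_bigr => i _; apply: eq_bigr => p _.
rewrite !mxE scaler_suml exchange_big /=; apply: eq_bigr => l _.
by rewrite !mxE mulr_suml scaler_suml.
Qed.

End QuadraticForm.

Lemma sum_ord2 (V : nmodType) (F : 'I_2 -> V) : \sum_i F i = F 0 + F 1.
Proof. rewrite !big_ord_recr big_ord0 /= add0r; congr (F _ + F _); exact: val_inj. Qed.

Lemma sum_ord3 (V : nmodType) (F : 'I_3 -> V) : \sum_i F i = F 0 + F 1 + F 2.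
Proof.
rewrite !big_ord_recr big_ord0 /= add0r; congr (F _ + F _ + F _); exact: val_inj.
Qed.

Lemma sum_ord4 (V : nmodType) (F : 'I_4 -> V) : \sum_i F i = F 0 + F 1 + F 2 + F 3.
Proof.
rewrite !big_ord_recr big_ord0 /= add0r; congr (F _ + F _ + F _ + F _); exact: val_inj.
Qed.

Lemma det_mx2 (R : comRingType) (M : 'M[R]_2) : \det M = M 0 0 * M 1 1 - M 0 1 * M 1 0.
Proof.
rewrite (expand_det_row _ 0) sum_ord2 /cofactor !det_mx11 !mxE.
have -> : lift 0 (0 : 'I_1) = 1 :> 'I_2 by apply: val_inj.
have -> : lift 1 (0 : 'I_1) = 0 :> 'I_2 by apply: val_inj.
by rewrite expr0 expr1 mul1r mulN1r mulrN.
Qed.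

Lemma mul_rV_delta (k : fieldType) m p (x : 'rV[k]_m) (a : 'I_m) (b : 'I_p) :
  x *m delta_mx a b = x 0 a *: delta_mx 0 b.
Proof.
apply/rowP => j; rewrite !mxE (bigD1 a) //= big1 => [|i nia]; last first.
  by rewrite mxE (negbTE nia) mulr0.
by rewrite !mxE eqxx addr0.
Qed.

Lemma nontrivial_lker (k : fieldType) m p (C : 'M[k]_(m, p)) : (\rank C < m)%N ->
  exists2 y : 'rV[k]_m, y != 0 & y *m C = 0.
Proof.
move=> rC; have /rowV0Pn [y /sub_kermxP yC0 y_neq0] : kermx C != 0.
  by rewrite -mxrank_eq0 mxrank_ker; lia.
by exists y.
Qed.

Section BilinearForm.
Variables (k : fieldType) (m : nat).
Implicit Types (A B : 'M[k]_m) (x y z : 'rV[k]_m).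

Definition bform A x y : k := (x *m A *m y^T) 0 0.

Lemma bformDl A x y z : bform A (x + y) z = bform A x z + bform A y z.
Proof. by rewrite /bform !mulmxDl mxE. Qed.
Lemma bformDr A x y z : bform A z (x + y) = bform A z x + bform A z y.
Proof. by rewrite /bform linearD /= mulmxDr mxE. Qed.
Lemma bformZl A c x z : bform A (c *: x) z = c * bform A x z.
Proof. by rewrite /bform -!scalemxAl mxE. Qed.
Lemma bformZr A c x z : bform A z (c *: x) = c * bform A z x.
Proof. by rewrite /bform linearZ /= -scalemxAr mxE. Qed.
Lemma bformNl A x z : bform A (- x) z = - bform A x z.
Proof. by rewrite -scaleN1r bformZl mulN1r. Qed.
Lemma bformNr A x z : bform A z (- x) = - bform A z x.
Proof. by rewrite -scaleN1r bformZr mulN1r. Qed.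
Definition bformE := (bformDl, bformDr, bformZl, bformZr, bformNl, bformNr).

Lemma bformDm A B x y : bform (A + B) x y = bform A x y + bform B x y.
Proof. by rewrite /bform mulmxDr mulmxDl mxE. Qed.
Lemma bformZm A c x y : bform (c *: A) x y = c * bform A x y.
Proof. by rewrite /bform -scalemxAr -scalemxAl mxE. Qed.

Lemma bform_sym A x y : A^T = A -> bform A x y = bform A y x.
Proof.
move=> sA; rewrite /bform [in LHS](_ : x *m A *m y^T = (y *m A *m x^T)^T) ?mxE //.
by rewrite !trmx_mul trmxK sA mulmxA.
Qed.

Lemma bform_eq A B x y z : x *m A = y *m B -> bform A x z = bform B y z.
Proof. by rewrite /bform => ->. Qed.

Lemma bform0l A x z : x *m A = 0 -> bform A x z = 0.
Proof. by rewrite /bform => ->; rewrite mul0mx mxE. Qed.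

Lemma bform_delta A x j : bform A x (delta_mx 0 j) = (x *m A) 0 j.
Proof. by rewrite /bform trmx_delta -colE mxE. Qed.

Lemma bform_deltaE A i j : bform A (delta_mx 0 i) (delta_mx 0 j) = A i j.
Proof. by rewrite bform_delta -rowE mxE. Qed.

Lemma gram_mxE p (N : 'M[k]_(p, m)) A i j :
  (N *m A *m N^T) i j = bform A (row i N) (row j N).
Proof.
rewrite /bform !mxE; apply: eq_bigr => l _; rewrite !mxE; congr (_ * _).
by apply: eq_bigr => s _; rewrite !mxE.
Qed.

Definition mxrows p (s : seq 'rV[k]_m) : 'M[k]_(p, m) := \matrix_(i < p) s`_i.

Lemma gram_mxrowsE p (s : seq 'rV[k]_m) A i j :
  (mxrows p s *m A *m (mxrows p s)^T) i j = bform A s`_i s`_j.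
Proof. by rewrite gram_mxE !rowK. Qed.

Lemma bform_orthogonal A B x0 x1 : (3 < m)%N -> exists2 y, y != 0 &
  [/\ bform A y x0 = 0, bform A y x1 = 0 & bform B y x1 = 0].
Proof.
move=> m3; pose C := row_mx (A *m x0^T) (row_mx (A *m x1^T) (B *m x1^T)).
have [y y_neq0] : exists2 y : 'rV[k]_m, y != 0 & y *m C = 0.
  by apply: nontrivial_lker; have := rank_leq_col C; lia.
rewrite !mul_mx_row => /eqP; rewrite !row_mx_eq0.
case/andP => /eqP yAx0 /andP[/eqP yAx1 /eqP yBx1].
by exists y; rewrite // /bform -!mulmxA yAx0 yAx1 yBx1 !mxE.
Qed.

End BilinearForm.

Definition lker_trivial (k : fieldType) m (A B : 'M[k]_m) : Prop :=
  forall x : 'rV[k]_m, x *m A = 0 -> x *m B = 0 -> x = 0.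

Section PencilCongruence.
Variables (k : fieldType) (m : nat).
Implicit Types (A B : 'M[k]_m).

Definition pencil_congr A B A' B' : Prop :=
  exists (M : 'M[k]_2) (N : 'M[k]_m), [/\ M \in unitmx, N \in unitmx,
    N *m (M 0 0 *: A + M 0 1 *: B) *m N^T = A' &
    N *m (M 1 0 *: A + M 1 1 *: B) *m N^T = B'].

Lemma lker_trivial_sym A B : A^T = A -> B^T = B ->
  kernels_meet_trivially A B -> lker_trivial A B.
Proof.
move=> sA sB AB0 x xA0 xB0; apply: trmx_inj; rewrite trmx0.
by apply: AB0; [rewrite -sA | rewrite -sB]; rewrite -trmx_mul ?xA0 ?xB0 trmx0.
Qed.

Lemma lker_trivial_mx p A B (X : 'M[k]_(p, m)) :
  lker_trivial A B -> X *m A = 0 -> X *m B = 0 -> X = 0.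
Proof.
move=> AB0 XA0 XB0; apply/row_matrixP => i; rewrite row0.
by apply: AB0; rewrite -row_mul ?XA0 ?XB0 row0.
Qed.

Lemma row_free_congr p (N : 'M[k]_(p, m)) A B (A' B' : 'M[k]_p) :
  N *m A *m N^T = A' -> N *m B *m N^T = B' -> lker_trivial A' B' -> row_free N.
Proof.
move=> <- <- A'B'0; apply: inj_row_free => x xN0.
by apply: A'B'0; rewrite !mulmxA xN0 !mul0mx.
Qed.

Lemma lker_trivial_congr (N : 'M[k]_m) A B : N \in unitmx ->
  lker_trivial A B -> lker_trivial (N *m A *m N^T) (N *m B *m N^T).
Proof.
move=> uN AB0 x; have fN : row_free N by rewrite row_free_unit.
have fNT : row_free N^T by rewrite row_free_unit unitmx_tr.
rewrite !mulmxA => /eqP; rewrite mulmx_free_eq0 // => /eqP xNA.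
move=> /eqP; rewrite mulmx_free_eq0 // => /eqP xNB.
by apply/eqP; rewrite -(mulmx_free_eq0 _ fN); apply/eqP/AB0.
Qed.

Lemma pencil_congr_comb (M : 'M[k]_2) (N : 'M[k]_m) A B A' B' :
  M \in unitmx -> N *m (M 0 0 *: A + M 0 1 *: B) *m N^T = A' ->
  N *m (M 1 0 *: A + M 1 1 *: B) *m N^T = B' -> lker_trivial A' B' ->
  pencil_congr A B A' B'.
Proof.
move=> uM eA eB A'B'0; exists M, N; split => //.
by rewrite -row_free_unit (row_free_congr eA eB).
Qed.

Lemma pencil_congr_basis (N : 'M[k]_m) A B A' B' :
  N *m A *m N^T = A' -> N *m B *m N^T = B' -> lker_trivial A' B' ->
  pencil_congr A B A' B'.
Proof.
have := @pencil_congr_comb 1%:M N A B A' B'.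
by rewrite unitmx1 !mxE /= !scale1r !scale0r addr0 add0r; apply.
Qed.

Lemma gram_comb (N : 'M[k]_m) (c d : k) A B :
  N *m (c *: A + d *: B) *m N^T = c *: (N *m A *m N^T) + d *: (N *m B *m N^T).
Proof. by rewrite mulmxDr mulmxDl -!scalemxAr -!scalemxAl. Qed.

Lemma gram_mul (N1 N2 : 'M[k]_m) A :
  (N2 *m N1) *m A *m (N2 *m N1)^T = N2 *m (N1 *m A *m N1^T) *m N2^T.
Proof. by rewrite trmx_mul !mulmxA. Qed.

Lemma pencil_congr_trans A B A' B' A'' B'' :
  pencil_congr A B A' B' -> pencil_congr A' B' A'' B'' -> pencil_congr A B A'' B''.
Proof.
move=> [M1 [N1 [uM1 uN1 eA' eB']]] [M2 [N2 [uM2 uN2 eA'' eB'']]].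
exists (M2 *m M1), (N2 *m N1); split; rewrite ?unitmx_mul ?uM1 ?uM2 ?uN1 ?uN2 //.
  rewrite -eA'' -eA' -eB' !gram_comb !gram_mul !mxE !sum_ord2.
  by rewrite !scalerDl !scalerDr !scalerA addrACA.
rewrite -eB'' -eA' -eB' !gram_comb !gram_mul !mxE !sum_ord2.
by rewrite !scalerDl !scalerDr !scalerA addrACA.
Qed.

End PencilCongruence.

Section KernelChain.
Variables (k : fieldType) (m : nat).
Implicit Types (A B : 'M[k]_m) (v : nat -> 'rV[k]_m).

(* [v] lists the coefficients of a polynomial row vector [v(X)] with [v(X) (A + X B) = 0]. *)
Definition kernel_chain A B v := v 0%N *m A = 0 /\ forall i, v i.+1 *m A + v i *m B = 0.

Definition null_pair A B := exists v0 v1 : 'rV[k]_m,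
  [/\ v0 *m A = 0, v1 *m A + v0 *m B = 0, v1 *m B = 0 & v0 != 0].

Lemma kernel_chain_isotropic A B v : A^T = A -> B^T = B -> kernel_chain A B v ->
  forall i j, bform A (v i) (v j) = 0 /\ bform B (v i) (v j) = 0.
Proof.
move=> sA sB [v0A vSAB].
have vSA i z : bform A (v i.+1) z = - bform B (v i) z.
  rewrite -bformNl; apply: bform_eq.
  by rewrite mulNmx; apply/eqP; rewrite -addr_eq0 vSAB.
have vB i j : bform B (v i) (v j) = 0.
  elim: i j => [|i IHi] j.
    by rewrite bform_sym // -[LHS]opprK -vSA bform_sym // bform0l ?oppr0.
  by rewrite bform_sym // -[LHS]opprK -vSA bform_sym // vSA IHi !oppr0.
move=> [|i] j; first by rewrite bform0l.
by rewrite vSA vB oppr0.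
Qed.

Lemma isotropic_rank p (V : 'M[k]_(p, m)) A B : lker_trivial A B ->
  V *m A *m V^T = 0 -> V *m B *m V^T = 0 -> (3 * \rank V <= 2 * m)%N.
Proof.
move=> AB0 VAV VBV.
have rA := mulmx0_rank_max VAV; have rB := mulmx0_rank_max VBV.
rewrite mxrank_tr in rA rB.
have capV : (kermx (V *m A) :&: kermx (V *m B) <= kermx V)%MS.
  apply/sub_kermxP/(lker_trivial_mx AB0); rewrite -mulmxA; apply/sub_kermxP.
    exact: capmxSl.
  exact: capmxSr.
have := mxrank_sum_cap (kermx (V *m A)) (kermx (V *m B)).
have := mxrankS capV; have := rank_leq_col (kermx (V *m A) + kermx (V *m B))%MS.
rewrite !mxrank_ker; have := rank_leq_row V; lia.
Qed.

(* A relation [c0 v0 + c1 v1 + c2 v2 = 0] yields the null pair [(c2 v0, c2 v1 + c1 v0)]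
   when [c2 != 0], and otherwise puts [c1 v0] in both kernels. *)
Lemma null_pair_of_kernel_chain A B v : (m <= 4)%N -> A^T = A -> B^T = B ->
  lker_trivial A B -> kernel_chain A B v -> v 0%N != 0 -> null_pair A B.
Proof.
move=> m4 sA sB AB0 chain v0_neq0; have [v0A vSAB] := chain.
have vB i : v i *m B = - (v i.+1 *m A).
  by apply/eqP; rewrite -addr_eq0 addrC vSAB.
pose V : 'M_(3, m) := \matrix_(i < 3) v i.
have [VAV VBV] : V *m A *m V^T = 0 /\ V *m B *m V^T = 0.
  by split; apply/matrixP => i j; rewrite gram_mxE !rowK mxE;
    have [] := kernel_chain_isotropic sA sB chain i j.
have [c c_neq0] : exists2 c : 'rV_3, c != 0 & c *m V = 0.
  by apply: nontrivial_lker; have := isotropic_rank AB0 VAV VBV; lia.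
have := row_sum_delta c; rewrite mulmx_sum_row !big_ord_recl !big_ord0 !addr0 !rowK /=.
set c0 := c 0 _; set c1 := c 0 _; set c2 := c 0 _ => cE dep.
have dep' : (c1 *: v 1%N + c2 *: v 2%N) *m A = 0.
  move/eqP: dep; rewrite addrC addr_eq0 => /eqP->.
  by rewrite -scaleNr -scalemxAl v0A scaler0.
have [c2_eq0 | c2_neq0] := eqVneq c2 0.
  have c1v0 : c1 *: v 0%N = 0.
    apply: AB0; first by rewrite -scalemxAl v0A scaler0.
    move: dep'; rewrite c2_eq0 scale0r addr0 => dep'.
    by rewrite -scalemxAl vB scalerN scalemxAl dep' oppr0.
  move/eqP: c1v0; rewrite scaler_eq0 (negbTE v0_neq0) orbF => /eqP c1_eq0.
  move/eqP: dep; rewrite c1_eq0 c2_eq0 !scale0r !addr0 scaler_eq0 (negbTE v0_neq0) orbF.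
  move=> /eqP c0_eq0; case/eqP: c_neq0.
  by rewrite cE c0_eq0 c1_eq0 c2_eq0 !scale0r !addr0.
exists (c2 *: v 0%N), (c2 *: v 1%N + c1 *: v 0%N); split.
- by rewrite -scalemxAl v0A scaler0.
- by rewrite mulmxDl -!scalemxAl v0A scaler0 addr0 -scalerDr vSAB scaler0.
- by rewrite mulmxDl -!scalemxAl !vB !scalerN -opprD !scalemxAl -mulmxDl addrC dep' oppr0.
- by rewrite scaler_eq0 negb_or c2_neq0.
Qed.

Lemma kernel_chain_shift A B v s : kernel_chain A B v ->
  (forall i, (i < s)%N -> v i = 0) -> kernel_chain A B (fun i => v (i + s)%N).
Proof.
move=> [v0A vSAB] v_lt_s; split=> [|i]; last by rewrite addSn vSAB.
case: s v_lt_s => [|s] v_lt_s //; have := vSAB s.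
by rewrite (v_lt_s s) // mul0mx addr0 add0n.
Qed.

Lemma kernel_chain_of_det0 A B :
  \det (\matrix_(i, j) ((A i j)%:P + 'X * (B i j)%:P)) = 0 ->
  exists2 v, kernel_chain A B v & v 0%N != 0.
Proof.
move=> /eqP /det0P [p p_neq0 pP0].
pose v i : 'rV[k]_m := \row_j (p 0 j)`_i.
have coefE i l : \sum_j (p 0 j)`_i * A j l +
    (if i is i'.+1 then \sum_j (p 0 j)`_i' * B j l else 0) = 0.
  transitivity ((p *m \matrix_(i, j) ((A i j)%:P + 'X * (B i j)%:P)) 0 l)`_i;
    last by rewrite pP0 mxE coef0.
  rewrite mxE coef_sum; case: i => [|i].
    rewrite addr0; apply: eq_bigr => j _.
    by rewrite !mxE mulrDr coefD mulrA !coefMC coefMX mul0r addr0.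
  rewrite -big_split /=; apply: eq_bigr => j _.
  by rewrite !mxE mulrDr coefD mulrA !coefMC coefMX.
have chain : kernel_chain A B v.
  split=> [|i]; apply/rowP => l; rewrite !mxE.
    by rewrite -[RHS](coefE 0%N l) addr0; apply: eq_bigr => j _; rewrite !mxE.
  by rewrite -[RHS](coefE i.+1 l); congr (_ + _); apply: eq_bigr => j _; rewrite !mxE.
have [j pj_neq0] : exists j, p 0 j != 0 by apply/rV0Pn.
have : exists i, v i != 0.
  exists (size (p 0 j)).-1; apply: contra pj_neq0 => /eqP/rowP/(_ j).
  by rewrite !mxE -lead_coefE => /eqP; rewrite lead_coef_eq0.
case/ex_minnP => s vs_neq0 s_min; exists (fun i => v (i + s)%N) => //.
apply: kernel_chain_shift chain _ => i i_lt_s; apply/eqP; apply: contraTT i_lt_s.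
by move/s_min; rewrite -leqNgt.
Qed.

End KernelChain.

Lemma det_pencil_poly (k : fieldType) m (A B : 'M[k]_m) : pencil_det A B = 0 ->
  \det (\matrix_(i, j) ((A i j)%:P + 'X * (B i j)%:P)) = 0.
Proof.
pose xz (i : 'I_2) : {poly k} := if i == 0 then 1 else 'X.
have -> : \matrix_(i, j) ((A i j)%:P + 'X * (B i j)%:P) =
    map_mx (mmap (@polyC k) xz) (('X_0 : {mpoly k[2]}) *: map_mx (fun a => a%:MP) A
                                 + ('X_1 : {mpoly k[2]}) *: map_mx (fun a => a%:MP) B).
  apply/matrixP => i j; rewrite !mxE mmapD !rmorphM /= !mmapX !mmapC !mmap1U /xz /=.
  by rewrite mul1r.
by rewrite det_map_mx -/(pencil_det A B) => ->; rewrite rmorph0.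
Qed.

Lemma hessian_null_pair (k : fieldType) m (Q1 Q2 : {mpoly k[m]}) :
  kernels_meet_trivially (hessian Q1) (hessian Q2) ->
  pencil_det (hessian Q1) (hessian Q2) = 0 -> (m <= 4)%N ->
  lker_trivial (hessian Q1) (hessian Q2) /\ null_pair (hessian Q1) (hessian Q2).
Proof.
move=> /(lker_trivial_sym (trmx_hessian Q1) (trmx_hessian Q2)) Q12 det0 m4; split=> //.
have [v chain v0_neq0] := kernel_chain_of_det0 (det_pencil_poly det0).
exact: null_pair_of_kernel_chain m4 (trmx_hessian Q1) (trmx_hessian Q2) Q12 chain v0_neq0.
Qed.

Section SingularTriple.
Variables (k : fieldType) (m : nat) (A B : 'M[k]_m).
Hypotheses (sA : A^T = A) (sB : B^T = B).

(* A basis of a subspace on which the pencil restricts to [(x1 x2, x2 x3)]. *)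
Definition singular_triple (w0 w1 w2 : 'rV[k]_m) :=
  [/\ w2 *m A = 0, w0 *m B = 0, w2 *m B = w0 *m A &
      [/\ bform A w0 w1 = 1, bform A w1 w1 = 0 & bform B w1 w1 = 0]].

Lemma singular_triple_of_null_pair : (2 : k) != 0 -> lker_trivial A B -> null_pair A B ->
  exists w0 w1 w2, singular_triple w0 w1 w2.
Proof.
move=> two AB0 [v0 [v1 [v0A v01 v1B v0_neq0]]].
have v0B : v0 *m B = (- v1) *m A by apply/eqP; rewrite mulNmx -addr_eq0 addrC v01.
have /rV0Pn [j al_neq0] : v1 *m A != 0.
  apply: contra v0_neq0 => /eqP v1A0; apply/eqP/AB0 => //.
  by rewrite v0B mulNmx v1A0 oppr0.
set al := (v1 *m A) 0 j in al_neq0; pose u : 'rV[k]_m := delta_mx 0 j.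
have A0x x : bform A v0 x = 0 by rewrite bform0l.
have Ax0 x : bform A x v0 = 0 by rewrite bform_sym.
have B1x x : bform B v1 x = 0 by rewrite bform0l.
have Bx1 x : bform B x v1 = 0 by rewrite bform_sym.
have B0x x : bform B v0 x = - bform A v1 x by rewrite (bform_eq _ v0B) bformNl.
have Bx0 x : bform B x v0 = - bform A v1 x by rewrite bform_sym.
have A11 : bform A v1 v1 = 0 by rewrite -[LHS]opprK -B0x Bx1 oppr0.
have A1u : bform A v1 u = al by rewrite bform_delta.
have Au1 : bform A u v1 = al by rewrite bform_sym.
(* The coefficients of [v0] and [v1] in [w1] make it isotropic for both forms. *)
exists (al^-1 *: v1),
  (u + (bform B u u / (2 * al)) *: v0 - (bform A u u / (2 * al)) *: v1), (- al^-1 *: v0).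
split; [| | | split].
- by rewrite -scalemxAl v0A scaler0.
- by rewrite -scalemxAl v1B scaler0.
- by rewrite -!scalemxAl v0B mulNmx scaleNr scalerN opprK.
all: rewrite !bformE ?A0x ?Ax0 ?B1x ?Bx1 ?B0x ?Bx0 ?A0x ?Ax0 ?A11 ?A1u ?Au1.
all: by field; rewrite ?al_neq0 ?two.
Qed.

End SingularTriple.

Section TripleGram.
Variables (k : fieldType) (m : nat) (A B : 'M[k]_m) (w0 w1 w2 : 'rV[k]_m).
Hypotheses (sA : A^T = A) (sB : B^T = B) (w012 : singular_triple A B w0 w1 w2).
Implicit Types (x : 'rV[k]_m).

Let w2A : w2 *m A = 0. Proof. by case: w012. Qed.
Let w0B : w0 *m B = 0. Proof. by case: w012. Qed.
Let w2B : w2 *m B = w0 *m A. Proof. by case: w012. Qed.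

Lemma triple_A2x x : bform A w2 x = 0. Proof. exact: bform0l. Qed.
Lemma triple_Ax2 x : bform A x w2 = 0. Proof. by rewrite bform_sym // triple_A2x. Qed.
Lemma triple_B0x x : bform B w0 x = 0. Proof. exact: bform0l. Qed.
Lemma triple_Bx0 x : bform B x w0 = 0. Proof. by rewrite bform_sym // triple_B0x. Qed.
Lemma triple_B2x x : bform B w2 x = bform A w0 x. Proof. exact: bform_eq. Qed.
Lemma triple_Bx2 x : bform B x w2 = bform A x w0.
Proof. by rewrite bform_sym // triple_B2x bform_sym. Qed.
Lemma triple_A00 : bform A w0 w0 = 0. Proof. by rewrite -triple_B2x triple_Bx0. Qed.
Lemma triple_A01 : bform A w0 w1 = 1. Proof. by case: w012 => _ _ _ []. Qed.
Lemma triple_A10 : bform A w1 w0 = 1. Proof. by rewrite bform_sym // triple_A01. Qed.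
Lemma triple_A11 : bform A w1 w1 = 0. Proof. by case: w012 => _ _ _ []. Qed.
Lemma triple_B11 : bform B w1 w1 = 0. Proof. by case: w012 => _ _ _ []. Qed.

Definition tripleE := (triple_A2x, triple_Ax2, triple_B0x, triple_Bx0, triple_B2x,
  triple_Bx2, triple_A00, triple_A01, triple_A10, triple_A11, triple_B11).

Let W := mxrows 3 [:: w0; w1; w2].

Lemma triple_gramA : W *m A *m W^T = hessian ('X_0 * 'X_1 : {mpoly k[3]}).
Proof.
apply/matrixP => i j; rewrite gram_mxrowsE hessian_mulXX !mxE.
by case: i j => [[|[|[|//]]] ?] [[|[|[|//]]] ?]; rewrite /= ?tripleE ?addr0 ?add0r.
Qed.

Lemma triple_gramB : W *m B *m W^T = hessian ('X_1 * 'X_2 : {mpoly k[3]}).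
Proof.
apply/matrixP => i j; rewrite gram_mxrowsE hessian_mulXX !mxE.
by case: i j => [[|[|[|//]]] ?] [[|[|[|//]]] ?]; rewrite /= ?tripleE ?addr0 ?add0r.
Qed.

End TripleGram.

Lemma lker_trivial_normal3 (k : fieldType) :
  lker_trivial (hessian ('X_0 * 'X_1 : {mpoly k[3]})) (hessian ('X_1 * 'X_2)).
Proof.
move=> x; rewrite !hessian_mulXX !mulmxDr !mul_rV_delta => /rowP xA /rowP xB.
move: (xA 0) (xA 1) (xB 1); rewrite !mxE /= !mulr0 !mulr1 ?addr0 ?add0r => x1 x0 x2.
by rewrite [x]row_sum_delta sum_ord3 x0 x1 x2 !scale0r !addr0.
Qed.

Lemma pencil_congr_normal3 (k : fieldType) (A B : 'M[k]_3) : (2 : k) != 0 ->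
  A^T = A -> B^T = B -> lker_trivial A B -> null_pair A B ->
  pencil_congr A B (hessian ('X_0 * 'X_1)) (hessian ('X_1 * 'X_2)).
Proof.
move=> two sA sB AB0 /(singular_triple_of_null_pair sA sB two AB0) [w0 [w1 [w2 w012]]].
apply: pencil_congr_basis (triple_gramA sA sB w012) (triple_gramB sA sB w012) _.
exact: lker_trivial_normal3.
Qed.

Section NormalForm4.
Variables (k : fieldType).
Hypothesis two : (2 : k) != 0.

Lemma normal4_lker (c c' : k) (x : 'rV[k]_4) :
  x *m hessian ('X_0 * 'X_1 + c *: 'X_3 ^+ 2) = 0 ->
  x *m hessian ('X_1 * 'X_2 + c' *: 'X_3 ^+ 2) = 0 ->
  x = x 0 3 *: delta_mx 0 3 /\ c * x 0 3 = 0 /\ c' * x 0 3 = 0.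
Proof.
rewrite !linearD !linearZ /= !hessian_mulXX !mulmxDr !mul_rV_delta => /rowP xA /rowP xB.
move: (xA 0) (xA 1) (xA 3) (xB 1) (xB 3); rewrite !mxE /= !mulr0 !mulr1 ?addr0 ?add0r.
rewrite !mulr0 !addr0 => x1 x0 cx3 x2 c'x3.
have x3_eq0 z : z * (x 0 3 + x 0 3) = 0 -> z * x 0 3 = 0.
  by move/eqP; rewrite -mulr2n mulrnAr -mulr_natl mulf_eq0 (negbTE two) => /eqP.
split; last by split; apply: x3_eq0.
by rewrite {1}[x]row_sum_delta sum_ord4 x0 x1 x2 !scale0r !add0r.
Qed.

Lemma lker_trivial_normal4 :
  lker_trivial (hessian ('X_0 * 'X_1 : {mpoly k[4]})) (hessian ('X_1 * 'X_2 - 'X_3 ^+ 2)).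
Proof.
move=> x xA xB; have [] := @normal4_lker 0 (-1) x.
- by rewrite scale0r addr0.
- by rewrite scaleN1r.
move=> xE [_] /eqP; rewrite mulN1r oppr_eq0 => /eqP x3.
by rewrite xE x3 scale0r.
Qed.

Lemma pencil_congr_diag4 (A B : 'M[k]_4) : A^T = A -> B^T = B ->
  lker_trivial A B -> null_pair A B -> exists c c', ((c != 0) || (c' != 0)) /\
  pencil_congr A B (hessian ('X_0 * 'X_1 + c *: 'X_3 ^+ 2))
                   (hessian ('X_1 * 'X_2 + c' *: 'X_3 ^+ 2)).
Proof.
move=> sA sB AB0 /(singular_triple_of_null_pair sA sB two AB0) [w0 [w1 [w2 w012]]].
have [y y_neq0 [Ay0 Ay1 By1]] := bform_orthogonal A B w0 w1 (isT : 3 < 4)%N.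
have A0y : bform A w0 y = 0 by rewrite bform_sym.
have A1y : bform A w1 y = 0 by rewrite bform_sym.
have B1y : bform B w1 y = 0 by rewrite bform_sym.
have half (D : 'M_4) : bform D y y / 2 * (1 + 1) = bform D y y by rewrite divfK.
pose N := mxrows 4 [:: w0; w1; w2; y].
have NA : N *m A *m N^T = hessian ('X_0 * 'X_1 + (bform A y y / 2) *: 'X_3 ^+ 2).
  apply/matrixP => i j; rewrite gram_mxrowsE linearD linearZ /= !hessian_mulXX !mxE.
  by case: i j => [[|[|[|[|//]]]] ?] [[|[|[|[|//]]]] ?];
    rewrite /= ?(tripleE sA sB w012) ?Ay0 ?A0y ?Ay1 ?A1y !(mulr0, addr0, add0r) ?half.
have NB : N *m B *m N^T = hessian ('X_1 * 'X_2 + (bform B y y / 2) *: 'X_3 ^+ 2).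
  apply/matrixP => i j; rewrite gram_mxrowsE linearD linearZ /= !hessian_mulXX !mxE.
  by case: i j => [[|[|[|[|//]]]] ?] [[|[|[|[|//]]]] ?];
    rewrite /= ?(tripleE sA sB w012) ?By1 ?B1y ?Ay0 ?A0y !(mulr0, addr0, add0r) ?half.
have uN : N \in unitmx.
  rewrite -row_free_unit; apply: inj_row_free => x xN0.
  have xNA : x *m (N *m A *m N^T) = 0 by rewrite !mulmxA xN0 !mul0mx.
  have xNB : x *m (N *m B *m N^T) = 0 by rewrite !mulmxA xN0 !mul0mx.
  rewrite NA in xNA; rewrite NB in xNB; have [xE _] := normal4_lker xNA xNB.
  move: xN0; rewrite xE -scalemxAl -rowE rowK /= => /eqP.
  by rewrite scaler_eq0 (negbTE y_neq0) orbF => /eqP->; rewrite scale0r.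
have := lker_trivial_congr uN AB0; rewrite NA NB => ABN0.
exists (bform A y y / 2), (bform B y y / 2).
split; last exact: pencil_congr_basis NA NB ABN0.
apply: contraT; rewrite negb_or !negbK => /andP[/eqP cA /eqP cB].
suff : delta_mx 0 3 = 0 :> 'rV[k]_4 by move/rowP/(_ 3)/eqP; rewrite !mxE /= oner_eq0.
by apply: ABN0; [rewrite cA | rewrite cB];
  rewrite scale0r addr0 hessian_mulXX mulmxDr !mul_rV_delta !mxE /= !scale0r addr0.
Qed.

(* Combine the two forms so that [x4^2] disappears from the first one and gets
   coefficient [-1] in the second, then change the basis of the [x1, x2, x3] part. *)
Lemma pencil_congr_normal4 (c c' : k) : (c != 0) || (c' != 0) ->
  pencil_congr (hessian ('X_0 * 'X_1 + c *: 'X_3 ^+ 2 : {mpoly k[4]}))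
               (hessian ('X_1 * 'X_2 + c' *: 'X_3 ^+ 2))
               (hessian ('X_0 * 'X_1)) (hessian ('X_1 * 'X_2 - 'X_3 ^+ 2)).
Proof.
move=> cc'; have hE (a b d : 'I_4) (e : k) :
    hessian ('X_a * 'X_b + e *: 'X_d ^+ 2 : {mpoly k[4]}) =
    delta_mx a b + delta_mx b a + e *: (delta_mx d d + delta_mx d d).
  by rewrite linearD linearZ /= !hessian_mulXX.
have h0 : hessian ('X_0 * 'X_1 : {mpoly k[4]}) = hessian ('X_0 * 'X_1 + 0 *: 'X_3 ^+ 2).
  by rewrite scale0r addr0.
have hN : hessian ('X_1 * 'X_2 - 'X_3 ^+ 2 : {mpoly k[4]}) =
    hessian ('X_1 * 'X_2 + (-1) *: 'X_3 ^+ 2) by rewrite scaleN1r.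
pose e (i : 'I_4) : 'rV[k]_4 := delta_mx 0 i.
have [c'0 | c'_neq0] := eqVneq c' 0.
- have c_neq0 : c != 0 by move: cc'; rewrite c'0 eqxx orbF.
  pose M : 'M[k]_2 := \matrix_(i, j) (if i == 0 then (if j == 0 then 0 else 1)
                                      else (if j == 0 then - c^-1 else 0)).
  apply: (@pencil_congr_comb _ _ M (mxrows 4 [:: e 2; e 1; - c *: e 0; e 3])).
  + by rewrite unitmxE det_mx2 !mxE /= unitfE mul0r mul1r sub0r opprK invr_eq0.
  + rewrite h0 !hE; apply/matrixP => i j; rewrite gram_mxrowsE.
    by case: i j => [[|[|[|[|//]]]] ?] [[|[|[|[|//]]]] ?];
      rewrite /= !(bformDm, bformZm, bformE) !bform_deltaE !mxE /= c'0; field.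
  + rewrite hN !hE; apply/matrixP => i j; rewrite gram_mxrowsE.
    by case: i j => [[|[|[|[|//]]]] ?] [[|[|[|[|//]]]] ?];
      rewrite /= !(bformDm, bformZm, bformE) !bform_deltaE !mxE /= c'0; field.
  + exact: lker_trivial_normal4.
- pose M : 'M[k]_2 := \matrix_(i, j) (if i == 0 then (if j == 0 then 1 else - (c / c'))
                                      else (if j == 0 then 0 else - c'^-1)).
  apply: (@pencil_congr_comb _ _ M (mxrows 4 [:: e 0; e 1; - c *: e 0 - c' *: e 2; e 3])).
  + by rewrite unitmxE det_mx2 !mxE /= unitfE mulr0 subr0 mul1r oppr_eq0 invr_eq0.
  + rewrite h0 !hE; apply/matrixP => i j; rewrite gram_mxrowsE.
    by case: i j => [[|[|[|[|//]]]] ?] [[|[|[|[|//]]]] ?];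
      rewrite /= !(bformDm, bformZm, bformE) !bform_deltaE !mxE /=; field.
  + rewrite hN !hE; apply/matrixP => i j; rewrite gram_mxrowsE.
    by case: i j => [[|[|[|[|//]]]] ?] [[|[|[|[|//]]]] ?];
      rewrite /= !(bformDm, bformZm, bformE) !bform_deltaE !mxE /=; field.
  + exact: lker_trivial_normal4.
Qed.

End NormalForm4.

Lemma k_equivalent_of_pencil_congr (k : fieldType) m (Q1 Q2 P1 P2 : {mpoly k[m]}) :
  (2 : k) != 0 -> Q1 \is 2.-homog -> Q2 \is 2.-homog -> P1 \is 2.-homog ->
  P2 \is 2.-homog -> pencil_congr (hessian Q1) (hessian Q2) (hessian P1) (hessian P2) ->
  k_equivalent Q1 Q2 P1 P2.
Proof.
move=> two hQ1 hQ2 hP1 hP2 [M [N [uM uN eP1 eP2]]].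
have halfE (P : {mpoly k[m]}) : P \is 2.-homog -> 2^-1 *: qform (hessian P) = P.
  by move=> hP; rewrite qform_hessian // scalerA mulVf // scale1r.
have substE c d : (c *: Q1 + d *: Q2) \mPo lin_subst N =
    2^-1 *: qform (N *m (c *: hessian Q1 + d *: hessian Q2) *m N^T).
  rewrite -qform_lin_subst -comp_mpolyZ -!linearZ /= -linearD /=.
  by rewrite linearZ /= halfE // rpredD // rpredZ.
by exists M, N; split; rewrite // substE ?eP1 ?eP2 halfE.
Qed.

Theorem lemma4p11 (k : fieldType) (char2 : ~ (2 \in [pchar k])) :
  (forall Q1 Q2 : {mpoly k[3]},
     quadratic_form Q1 -> quadratic_form Q2 ->
     kernels_meet_trivially (hessian Q1) (hessian Q2) ->
     pencil_det (hessian Q1) (hessian Q2) = 0 ->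
     k_equivalent Q1 Q2 ('X_0 * 'X_1) ('X_1 * 'X_2))
  /\
  (forall Q1 Q2 : {mpoly k[4]},
     quadratic_form Q1 -> quadratic_form Q2 ->
     kernels_meet_trivially (hessian Q1) (hessian Q2) ->
     pencil_det (hessian Q1) (hessian Q2) = 0 ->
     k_equivalent Q1 Q2 ('X_0 * 'X_1) ('X_1 * 'X_2 - 'X_3 ^+ 2)).
Proof.
have two : (2 : k) != 0 by apply/negP => two0; apply: char2; rewrite inE /= two0.
have homogXX n (a b : 'I_n) : ('X_a * 'X_b : {mpoly k[n]}) \is 2.-homog.
  by rewrite -mpolyXD dhomogX /= mdegD !mdeg1.
split=> Q1 Q2 hQ1 hQ2 ker0 det0;
  have [Q12 Q12pair] := hessian_null_pair ker0 det0 isT;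
  apply: k_equivalent_of_pencil_congr; rewrite ?homogXX //.
- exact: pencil_congr_normal3 two (trmx_hessian Q1) (trmx_hessian Q2) Q12 Q12pair.
- by rewrite rpredB // ?expr2 homogXX.
have [c [c' [cc' Q12c]]] :=
  pencil_congr_diag4 two (trmx_hessian Q1) (trmx_hessian Q2) Q12 Q12pair.
exact: pencil_congr_trans Q12c (pencil_congr_normal4 two cc').
Qed.
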